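(* Let $T:X\rightrightarrows X^*$ be a multivalued operator. If $S(T,K)=S(T^\rho,K)$ for all $K\subset X$, or $M(T,K)=M(T^\rho,K)$ for all $K\subset X$, then $T$ is pre-maximal pseudomonotone.
   Context: $X$ is a real Banach space with dual $X^*$ and pairing $\langle x,x^*\rangle=x^*(x)$. A multivalued operator $T:X\rightrightarrows X^*$ is identified with its graph $T\subset X\times X^*$; $T(x)=\{x^*:(x,x^* )\in T\}$. For $K\subset X$: $S(T,K)=\{x\in K: \exists x^*\in T(x),\ \langle y-x,x^*\rangle\ge0\ \forall y\in K\}$ and $M(T,K)=\{x\in K: \langle x-y,y^*\rangle\le0\ \forall (y,y^* )\in T \text{ with } y\in K\}$. For $(x,x^* ),(y,y^* )\in X\times X^*$, write $(x,x^* )\sim_p(y,y^* )$ if either $\min\{\langle x-y,y^*\rangle,\langle y-x,x^*\rangle\}<0$ or $\langle x-y,y^*\rangle=\langle y-x,x^*\rangle=0$. The pseudomonotone polar is $T^\rho=\{(x,x^* ): (x,x^* )\sim_p(y,y^* )\ \forall (y,y^* )\in T\}$. $T$ is pseudomonotone if for all $(x,x^* ),(y,y^* )\in T$, $\langle y-x,x^*\rangle\ge0$ implies $\langle y-x,y^*\rangle\ge0$; $T$ is pre-maximal pseudomonotone if both $T$ and $T^\rho$ are pseudomonotone. *)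

From Stdlib Require Import Reals.
Open Scope R_scope.

Record Banach := {
  B :> Type;
  bzero : B;
  badd : B -> B -> B;
  bopp : B -> B;
  bscal : R -> B -> B;
  bnorm : B -> R;
  badd_assoc : forall x y z, badd x (badd y z) = badd (badd x y) z;
  badd_comm : forall x y, badd x y = badd y x;
  badd_0 : forall x, badd x bzero = x;
  badd_opp : forall x, badd x (bopp x) = bzero;
  bscal_1 : forall x, bscal 1 x = x;
  bscal_assoc : forall a b x, bscal a (bscal b x) = bscal (a * b) x;
  bscal_distr_l : forall a x y, bscal a (badd x y) = badd (bscal a x) (bscal a y);
  bscal_distr_r : forall a b x, bscal (a + b) x = badd (bscal a x) (bscal b x);
  bnorm_eq0 : forall x, bnorm x = 0 -> x = bzero;
  bnorm_scal : forall a x, bnorm (bscal a x) = Rabs a * bnorm x;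
  bnorm_tri : forall x y, bnorm (badd x y) <= bnorm x + bnorm y;
  bcomplete : forall u : nat -> B,
    (forall eps, eps > 0 -> exists N, forall m n, (m >= N)%nat -> (n >= N)%nat ->
        bnorm (badd (u m) (bopp (u n))) < eps) ->
    exists l, forall eps, eps > 0 -> exists N, forall n, (n >= N)%nat ->
        bnorm (badd (u n) (bopp l)) < eps
}.

Arguments badd {_} _ _.
Arguments bopp {_} _.
Arguments bscal {_} _ _.
Arguments bnorm {_} _.

Definition bsub {X : Banach} (x y : X) : X := badd x (bopp y).

(** Topological dual X^*: continuous (= bounded) linear functionals. *)
Record dual (X : Banach) := {
  dfun :> X -> R;
  dfun_add : forall x y, dfun (badd x y) = dfun x + dfun y;
  dfun_scal : forall a x, dfun (bscal a x) = a * dfun x;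
  dfun_bounded : exists c, forall x, Rabs (dfun x) <= c * bnorm x
}.

Definition pairing {X : Banach} (x : X) (f : dual X) : R := dfun X f x.

(** Multivalued operators identified with their graphs. *)
Definition operator (X : Banach) := X -> dual X -> Prop.

Definition S_set {X : Banach} (T : operator X) (K : X -> Prop) (x : X) : Prop :=
  K x /\ exists xs, T x xs /\ forall y, K y -> pairing (bsub y x) xs >= 0.

Definition M_set {X : Banach} (T : operator X) (K : X -> Prop) (x : X) : Prop :=
  K x /\ forall y ys, T y ys -> K y -> pairing (bsub x y) ys <= 0.

Definition sim_p {X : Banach} (x : X) (xs : dual X) (y : X) (ys : dual X) : Prop :=
  Rmin (pairing (bsub x y) ys) (pairing (bsub y x) xs) < 0 \/
  (pairing (bsub x y) ys = 0 /\ pairing (bsub y x) xs = 0).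

Definition rho {X : Banach} (T : operator X) : operator X :=
  fun x xs => forall y ys, T y ys -> sim_p x xs y ys.

Definition pseudomonotone {X : Banach} (T : operator X) : Prop :=
  forall x xs y ys, T x xs -> T y ys ->
    pairing (bsub y x) xs >= 0 -> pairing (bsub y x) ys >= 0.

Definition pre_maximal_pseudomonotone {X : Banach} (T : operator X) : Prop :=
  pseudomonotone T /\ pseudomonotone (rho T).

From Stdlib Require Import Reals Lra.
Open Scope R_scope.

(* Both hypotheses are tested on two-point sets K = {x, y}.  Every
   element of T^rho is ~p-related to every element of T, and a ~p-relation
   transfers the sign condition <y - x, .> >= 0 from one side to the other;
   this is precisely pseudomonotonicity between the two points. *)

Lemma dfun0 (X : Banach) (f : dual X) : f (bzero X) = 0.
Proof.
  pose proof (dfun_add X f (bzero X) (bzero X)) as Hadd.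
  rewrite badd_0 in Hadd; lra.
Qed.

Lemma pairing_bsub (X : Banach) (a b : X) (f : dual X) :
  pairing (bsub a b) f = f a - f b.
Proof.
  unfold pairing, bsub; rewrite dfun_add.
  pose proof (dfun_add X f b (bopp b)) as Hopp.
  rewrite badd_opp, dfun0 in Hopp; lra.
Qed.

Section SimP.

Variable X : Banach.
Implicit Types (x y : X) (xs ys : dual X).

Lemma sim_p_sym x xs y ys : sim_p x xs y ys -> sim_p y ys x xs.
Proof.
  unfold sim_p; rewrite Rmin_comm; intros [Hmin | [H1 H2]]; auto.
Qed.

Lemma sim_p_pseudomonotone x xs y ys :
  sim_p x xs y ys -> pairing (bsub y x) xs >= 0 -> pairing (bsub y x) ys >= 0.
Proof.
  unfold sim_p; rewrite !pairing_bsub; intros Hsim Hxs.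
  apply Rnot_lt_ge; intros Hys.
  destruct Hsim as [Hmin | [H1 H2]]; [|lra].
  revert Hmin; unfold Rmin; destruct Rle_dec; lra.
Qed.

End SimP.

Section TwoPointSets.

Variables (X : Banach) (T : operator X) (x y : X).

Let K : X -> Prop := fun z => z = x \/ z = y.

Lemma S_set_pair :
  S_set T K x <-> exists xs, T x xs /\ pairing (bsub y x) xs >= 0.
Proof.
  split.
  - intros [_ [xs [Hxs Hvi]]]; exists xs; split; auto.
    apply Hvi; now right.
  - intros [xs [Hxs Hy]]; split; [now left|].
    exists xs; split; auto.
    intros z [-> | ->]; auto.
    rewrite pairing_bsub; lra.
Qed.

Lemma M_set_pair :
  M_set T K x <-> forall ys, T y ys -> pairing (bsub x y) ys <= 0.
Proof.
  split.
  - intros [_ Hmvi] ys Hys; apply Hmvi; auto; now right.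
  - intros Hy; split; [now left|].
    intros z zs Hzs [-> | ->]; auto.
    rewrite pairing_bsub; lra.
Qed.

End TwoPointSets.

Section PseudomonotoneCriteria.

Variables (X : Banach) (T U : operator X).

Lemma pseudomonotone_of_S_set_incl :
  (forall K x, S_set T K x -> S_set U K x) ->
  (forall x xs y ys, U x xs -> T y ys -> sim_p x xs y ys) ->
  pseudomonotone T.
Proof.
  intros HS Hsim x xs y ys Hxs Hys Hxy.
  destruct (proj1 (S_set_pair X U x y)) as [zs [Hzs Hyzs]].
  { apply HS, S_set_pair; eauto. }
  exact (sim_p_pseudomonotone X x zs y ys (Hsim _ _ _ _ Hzs Hys) Hyzs).
Qed.

Lemma pseudomonotone_of_M_set_incl :
  (forall K x, M_set U K x -> M_set T K x) ->
  (forall x xs y ys, T x xs -> U y ys -> sim_p x xs y ys) ->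
  pseudomonotone T.
Proof.
  intros HM Hsim x xs y ys Hxs Hys Hxy.
  assert (Hx : M_set T (fun z => z = x \/ z = y) x).
  { apply HM, M_set_pair; intros ws Hws.
    pose proof (sim_p_pseudomonotone X x xs y ws (Hsim _ _ _ _ Hxs Hws) Hxy).
    rewrite pairing_bsub in *; lra. }
  pose proof (proj1 (M_set_pair X T x y) Hx ys Hys).
  rewrite pairing_bsub in *; lra.
Qed.

End PseudomonotoneCriteria.

Theorem mainTheorem19 (X : Banach) (T : operator X) :
  ((forall (K : X -> Prop) (x : X), S_set T K x <-> S_set (rho T) K x) \/
   (forall (K : X -> Prop) (x : X), M_set T K x <-> M_set (rho T) K x)) ->
  pre_maximal_pseudomonotone T.
Proof.
  assert (HrhoT : forall x xs y ys, rho T x xs -> T y ys -> sim_p x xs y ys).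
  { intros x xs y ys Hxs Hys; exact (Hxs y ys Hys). }
  assert (HTrho : forall x xs y ys, T x xs -> rho T y ys -> sim_p x xs y ys).
  { intros x xs y ys Hxs Hys; apply sim_p_sym, HrhoT; auto. }
  intros [HS | HM]; split.
  - apply (pseudomonotone_of_S_set_incl X T (rho T)); [apply HS | exact HrhoT].
  - apply (pseudomonotone_of_S_set_incl X (rho T) T); [apply HS | exact HTrho].
  - apply (pseudomonotone_of_M_set_incl X T (rho T)); [apply HM | exact HTrho].
  - apply (pseudomonotone_of_M_set_incl X (rho T) T); [apply HM | exact HrhoT].
Qed.
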